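(* Let $d\ge1$ be an integer and $0<\lambda<1$. Let $\mathbf{v}^+(\cdot)$ and $\mathbf{v}^-(\cdot)$ be solutions of the differential system \[\frac{d}{dt}v_k(t)=\lambda(v_{k-1}(t)-v_k(t))-(1-v_{k+1}(t))^d+(1-v_{k}(t))^d,\qquad k=1,2,\dots,\] (with zeroth coordinate identically $1$) with respective initial conditions $\mathbf{v}^+(0),\mathbf{v}^-(0)\in U$ such that $v^+_k(0)\ge v^-_k(0)$ for all $k$. Then $v^+_k(t)\ge v^-_k(t)$ for all $k$ and all $t>0$.
   Context: $U$ is the set of sequences $\mathbf{u}=\{u_k\}_{k\ge0}$ with $1=u_0\ge u_1\ge u_2\ge\cdots\ge 0$. *)

From Stdlib Require Import Reals.
From Coquelicot Require Import Coquelicot.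
Open Scope R_scope.

Definition inU (u : nat -> R) : Prop :=
  u 0%nat = 1 /\ (forall k : nat, u (S k) <= u k) /\ (forall k : nat, 0 <= u k).

Definition rhs (d : nat) (lam : R) (u : nat -> R) (k : nat) : R :=
  lam * (u (k - 1)%nat - u k) - (1 - u (S k)) ^ d + (1 - u k) ^ d.

Definition is_solution (d : nat) (lam : R) (v : R -> nat -> R) : Prop :=
  (forall t : R, 0 <= t -> v t 0%nat = 1) /\
  (forall t : R, 0 <= t -> inU (v t)) /\
  (forall (k : nat) (t : R), (1 <= k)%nat -> 0 < t ->
      derivable_pt_lim (fun s => v s k) t (rhs d lam (v t) k)) /\
  (forall k : nat, filterlim (fun s => v s k) (at_right 0) (locally (v 0 k))).

(* Let w_k = v^-_k - v^+_k.  Since the system is cooperative, e^((lam+d)t) w_k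
   grows at rate at most (lam+2d) e^((lam+d)t) B whenever w_j <= B for all j.
   Hence, on a time step of length h with (lam+2d) h <= 1/2 at whose left end
   w <= 0, a uniform bound w <= B on the step improves to w <= B/2; iterating
   from B = 1 forces w <= 0 on the step, and stepping forward covers all t. *)

From Stdlib Require Import Reals Lra Lia.
From Coquelicot Require Import Coquelicot.
Open Scope R_scope.

Lemma inU_bounds (u : nat -> R) : inU u -> forall j : nat, 0 <= u j <= 1.
Proof.
  intros [u0 [u_decr u_nonneg]] j; split; [apply u_nonneg |].
  induction j as [|j IH]; [lra | specialize (u_decr j); lra].
Qed.

Lemma pow_sub_bounds (d : nat) (x y : R) :
  0 <= y <= x -> x <= 1 -> 0 <= x ^ d - y ^ d <= INR d * (x - y).
Proof.
  intros Hy Hx; induction d as [|d IH]; [simpl; lra |].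
  rewrite S_INR; simpl.
  assert (y ^ d <= 1) by (rewrite <- (pow1 d); apply pow_incr; lra).
  assert (0 <= y ^ d) by (apply pow_le; lra).
  assert (y ^ d <= x ^ d) by (apply pow_incr; lra).
  split; nra.
Qed.

Lemma pow_sub_le (d : nat) (x y B : R) :
  0 <= x <= 1 -> 0 <= y <= 1 -> x - y <= B -> 0 <= B ->
  x ^ d - y ^ d <= INR d * B.
Proof.
  intros Hx Hy HxyB HB; pose proof (pos_INR d).
  destruct (Rle_dec y x).
  - pose proof (pow_sub_bounds d x y ltac:(lra) ltac:(lra)); nra.
  - pose proof (pow_sub_bounds d y x ltac:(lra) ltac:(lra)); nra.
Qed.

Lemma linear_sub_pow_sub_le (d : nat) (x y B : R) :
  0 <= x <= 1 -> 0 <= y <= 1 -> x - y <= B -> 0 <= B ->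
  INR d * (x - y) - (x ^ d - y ^ d) <= INR d * B.
Proof.
  intros Hx Hy HxyB HB; pose proof (pos_INR d).
  destruct (Rle_dec y x).
  - pose proof (pow_sub_bounds d x y ltac:(lra) ltac:(lra)); nra.
  - pose proof (pow_sub_bounds d y x ltac:(lra) ltac:(lra)); nra.
Qed.

(* The system is cooperative: the k-th right-hand side is nondecreasing in
   u_(k-1) and u_(k+1), and adding (lam + d) u_k makes it nondecreasing in u_k
   as well. *)
Lemma rhs_sub_le (d : nat) (lam : R) (u p : nat -> R) (k : nat) (B : R) :
  inU u -> inU p -> 0 <= lam -> (forall j : nat, u j - p j <= B) ->
  rhs d lam u k - rhs d lam p k + (lam + INR d) * (u k - p k)
    <= (lam + 2 * INR d) * B.
Proof.
  intros Hu Hp Hlam HB.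
  pose proof (inU_bounds u Hu) as u_bounds; pose proof (inU_bounds p Hp) as p_bounds.
  assert (B_nonneg : 0 <= B) by (specialize (HB 0%nat); destruct Hu, Hp; lra).
  assert ((1 - p (S k)) ^ d - (1 - u (S k)) ^ d <= INR d * B).
  { apply pow_sub_le; [specialize (p_bounds (S k)) | specialize (u_bounds (S k)) |
      specialize (HB (S k)) | ]; lra. }
  assert (INR d * ((1 - p k) - (1 - u k)) - ((1 - p k) ^ d - (1 - u k) ^ d) <= INR d * B).
  { apply linear_sub_pow_sub_le; [specialize (p_bounds k) | specialize (u_bounds k) |
      specialize (HB k) | ]; lra. }
  specialize (HB (k - 1)%nat); unfold rhs; nra.
Qed.

Lemma exp_le_of_le (x y : R) : x <= y -> exp x <= exp y.
Proof. intros [Hxy | ->]; [left; apply exp_increasing, Hxy | right; reflexivity]. Qed.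

Lemma nonpos_of_le_half_pow (x : R) : (forall n : nat, x <= 2 * (1 / 2) ^ n) -> x <= 0.
Proof.
  intros H; destruct (Rle_dec x 0) as [|Hx]; [assumption | exfalso].
  destruct (pow_lt_1_zero (1 / 2) ltac:(rewrite Rabs_right; lra) (x / 2) ltac:(lra))
    as [N HN].
  specialize (HN N (le_n N)); specialize (H N).
  pose proof (Rle_abs ((1 / 2) ^ N)); lra.
Qed.

Lemma solution_right_continuous (d : nat) (lam : R) (v : R -> nat -> R) (a : R) (k : nat) :
  is_solution d lam v -> 0 <= a -> (1 <= k)%nat ->
  filterlim (fun s => v s k) (at_right a) (locally (v a k)).
Proof.
  intros [_ [_ [v_der v_cont0]]] Ha Hk.
  destruct (Req_dec a 0) as [->|Ha0]; [apply v_cont0 |].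
  apply (filterlim_filter_le_1 _ (filter_le_within (F := locally a) _)).
  apply continuity_pt_filterlim, derivable_continuous_pt.
  exists (rhs d lam (v a) k); apply v_der; [exact Hk | lra].
Qed.

Lemma at_right_witness (f g : R -> R) (a s eps : R) :
  filterlim f (at_right a) (locally (f a)) -> filterlim g (at_right a) (locally (g a)) ->
  a < s -> 0 < eps ->
  exists y, a < y < s /\ Rabs (f y - f a) < eps /\ Rabs (g y - g a) < eps.
Proof.
  intros Hf Hg Has Heps.
  apply filterlim_locally with (eps := mkposreal eps Heps) in Hf, Hg.
  assert (Hright : at_right a (fun y => a < y < s)).
  { exists (mkposreal (s - a) ltac:(lra)); intros y Hy Hay; split; [exact Hay |].
    revert Hy; unfold ball; simpl; unfold AbsRing_ball, abs, minus, plus, opp; simpl.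
    intros Hy; apply Rabs_def2 in Hy; lra. }
  destruct (filter_ex _ (filter_and _ _ Hright (filter_and _ _ Hf Hg)))
    as [y [Hy [Hfy Hgy]]].
  exists y; split; [exact Hy | split; [exact Hfy | exact Hgy]].
Qed.

Section Comparison.

Variables (d : nat) (lam : R) (vp vm : R -> nat -> R).
Hypotheses (lam_pos : 0 < lam)
  (vp_sol : is_solution d lam vp) (vm_sol : is_solution d lam vm)
  (initial_order : forall k : nat, vm 0 k <= vp 0 k).

Let w (k : nat) (s : R) : R := vm s k - vp s k.
Let M : R := lam + INR d.
Let C : R := lam + 2 * INR d.

Lemma gap0 (s : R) : 0 <= s -> w 0 s = 0.
Proof.
  intros Hs; unfold w; destruct vp_sol as [vp0 _]; destruct vm_sol as [vm0 _].
  rewrite vp0, vm0; [ring | exact Hs | exact Hs].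
Qed.

Lemma gap_le1 (s : R) (k : nat) : 0 <= s -> w k s <= 1.
Proof.
  intros Hs; unfold w; destruct vp_sol as [_ [vpU _]]; destruct vm_sol as [_ [vmU _]].
  pose proof (inU_bounds _ (vpU s Hs) k); pose proof (inU_bounds _ (vmU s Hs) k); lra.
Qed.

Lemma weighted_gap_increment (a s B : R) (k : nat) :
  0 < a < s -> (1 <= k)%nat -> (forall x j, a < x < s -> w j x <= B) ->
  exp (M * s) * w k s - exp (M * a) * w k a <= exp (M * s) * (C * B) * (s - a).
Proof.
  intros Has Hk HB.
  destruct vp_sol as [_ [vpU [vp_der _]]]; destruct vm_sol as [_ [vmU [vm_der _]]].
  destruct (MVT_cor2 (fun x => exp (M * x) * w k x)
     (fun x => exp (M * x) * (rhs d lam (vm x) k - rhs d lam (vp x) k + M * w k x))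
     a s ltac:(lra)) as [c [Hmvt Hc]].
  { intros c Hc.
    assert (Hexp : derivable_pt_lim (fun x => exp (M * x)) c (M * exp (M * c)))
      by (apply is_derive_Reals; auto_derive; [exact I | ring]).
    replace (exp (M * c) * (rhs d lam (vm c) k - rhs d lam (vp c) k + M * w k c))
      with (M * exp (M * c) * w k c
            + exp (M * c) * (rhs d lam (vm c) k - rhs d lam (vp c) k)) by ring.
    apply (derivable_pt_lim_mult _ _ _ _ _ Hexp), derivable_pt_lim_minus;
      [apply vm_der | apply vp_der]; lra || exact Hk. }
  rewrite Hmvt; apply Rmult_le_compat_r; [lra |].
  assert (B_nonneg : 0 <= B)
    by (rewrite <- (gap0 c) by lra; apply HB; exact Hc).
  assert (Hrhs : rhs d lam (vm c) k - rhs d lam (vp c) k + M * w k c <= C * B)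
    by (apply rhs_sub_le; [apply vmU | apply vpU | | intros j; apply HB]; lra).
  assert (exp (M * c) <= exp (M * s))
    by (apply exp_le_of_le; pose proof (pos_INR d); unfold M; nra).
  pose proof (exp_pos (M * c)); pose proof (pos_INR d).
  assert (0 <= C * B) by (unfold C; nra).
  nra.
Qed.

Lemma gap_halving (a h B : R) :
  0 <= a -> 0 < h -> C * h <= 1 / 2 -> (forall k, w k a <= 0) ->
  (forall x k, a < x <= a + h -> w k x <= B) ->
  forall x k, a < x <= a + h -> w k x <= B / 2.
Proof.
  intros Ha Hh HCh Ha0 HB x k Hx.
  assert (B_nonneg : 0 <= B) by (rewrite <- (gap0 x) by lra; apply HB; exact Hx).
  destruct k as [|k]; [rewrite gap0; lra |].
  apply Rle_plus_epsilon; intros eps Heps.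
  (* No derivative at a itself: start the weighted estimate at a point y just
     to the right of a, where right continuity keeps w small. *)
  destruct (at_right_witness (fun s => vm s (S k)) (fun s => vp s (S k)) a x (eps / 2)
              (solution_right_continuous d lam vm a (S k) vm_sol Ha ltac:(lia))
              (solution_right_continuous d lam vp a (S k) vp_sol Ha ltac:(lia))
              ltac:(lra) ltac:(lra)) as [y [Hy [Hvm Hvp]]].
  apply Rabs_def2 in Hvm, Hvp.
  assert (Hwy : w (S k) y < eps) by (specialize (Ha0 (S k)); unfold w in *; lra).
  pose proof (weighted_gap_increment y x B (S k) ltac:(lra) ltac:(lia)
                (fun x' j Hx' => HB x' j ltac:(lra))) as Hincr.
  assert (exp (M * y) <= exp (M * x))
    by (apply exp_le_of_le; pose proof (pos_INR d); unfold M; nra).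
  pose proof (exp_pos (M * x)); pose proof (exp_pos (M * y)).
  assert (C * (x - y) <= 1 / 2).
  { assert (0 <= C) by (pose proof (pos_INR d); unfold C; lra).
    pose proof (Rmult_le_compat_l C (x - y) h ltac:(lra) ltac:(lra)); lra. }
  assert (Hdrift : C * B * (x - y) <= B / 2) by nra.
  assert (Hstart : exp (M * y) * w (S k) y <= exp (M * x) * eps)
    by (destruct (Rle_dec (w (S k) y) 0); nra).
  apply (Rmult_le_reg_l (exp (M * x))); [lra |].
  rewrite Rmult_assoc in Hincr.
  pose proof (Rmult_le_compat_l (exp (M * x)) _ _ ltac:(lra) Hdrift).
  lra.
Qed.

Lemma gap_nonpos_after (a h : R) :
  0 <= a -> 0 < h -> C * h <= 1 / 2 -> (forall k, w k a <= 0) ->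
  forall x k, a < x <= a + h -> w k x <= 0.
Proof.
  intros Ha Hh HCh Ha0 x k Hx.
  apply nonpos_of_le_half_pow; intros n; revert x k Hx.
  induction n as [|n IH]; intros x k Hx.
  - pose proof (gap_le1 x k ltac:(lra)); simpl; lra.
  - replace (2 * (1 / 2) ^ S n) with (2 * (1 / 2) ^ n / 2) by (simpl; field).
    exact (gap_halving a h _ Ha Hh HCh Ha0 IH x k Hx).
Qed.

Lemma gap_nonpos (t : R) (k : nat) : 0 <= t -> w k t <= 0.
Proof.
  intros Ht.
  assert (C_pos : 0 < C) by (pose proof (pos_INR d); unfold C; lra).
  set (h := 1 / (2 * C)).
  assert (h_pos : 0 < h) by (unfold h; apply Rdiv_lt_0_compat; lra).
  assert (HCh : C * h <= 1 / 2) by (unfold h; right; field; lra).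
  assert (upto : forall n : nat, forall x k, 0 <= x <= INR n * h -> w k x <= 0).
  { induction n as [|n IH]; intros x j Hx.
    - simpl in Hx; replace x with 0 by lra.
      unfold w; specialize (initial_order j); lra.
    - rewrite S_INR in Hx; pose proof (pos_INR n).
      destruct (Rle_dec x (INR n * h)); [apply IH; lra |].
      apply (gap_nonpos_after (INR n * h) h); [nra | lra | lra | | lra].
      intros j'; apply IH; split; [nra | lra]. }
  destruct (INR_unbounded (t / h)) as [n Hn].
  apply (upto n); split; [exact Ht |].
  apply Rmult_gt_compat_r with (r := h) in Hn; [| exact h_pos].
  unfold Rdiv in Hn; rewrite Rmult_assoc, Rinv_l in Hn; lra.
Qed.

End Comparison.

Theorem lemma3p2 (d : nat) (lam : R) (vp vm : R -> nat -> R) :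
  (1 <= d)%nat -> 0 < lam -> lam < 1 ->
  is_solution d lam vp -> is_solution d lam vm ->
  inU (vp 0) -> inU (vm 0) ->
  (forall k : nat, vm 0 k <= vp 0 k) ->
  forall (t : R), 0 < t -> forall k : nat, vm t k <= vp t k.
Proof.
  intros _ lam_pos _ vp_sol vm_sol _ _ initial_order t Ht k.
  apply Rminus_le, (gap_nonpos d lam vp vm lam_pos vp_sol vm_sol initial_order).
  lra.
Qed.
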